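(* Let $G=(V,E)$ be a connected graph with $n$ vertices, $\tau$ a set of types, $f:\tau\to\mathbb{Q}_{\ge1}$ a fitness function, $\alpha\in\tau^+(f)$, and $D\in\mathcal D(G,\tau)$. Then $\pi_\alpha(G,\tau,f,D)\ge 1/n$.
   Context: $\tau^+(f)=\{i\in\tau: f(i)=\max_{j\in\tau}f(j)\}$. For $G=(V,E)$, $N(v)$ is the neighbourhood of $v$. $\Omega$ is the set of functions $V\to\tau$; for $S\in\Omega$, $S|_{v\to w}$ equals $S$ except $w$ gets type $S(v)$. The Moran process $M(G,\tau,f,M_0)$: Markov chain on $\Omega$ from $M_0$; given $M_t$, choose $v$ with probability $f(M_t(v))/\sum_uf(M_t(u))$, then $w\in N(v)$ uniformly, set $M_{t+1}=M_t|_{v\to w}$. $\pi_j(G,\tau,f,M_0)$ is the probability that eventually all vertices have type $j$, and $\pi_j(G,\tau,f,D)=\sum_{M_0}\Pr_D(M_0)\pi_j(G,\tau,f,M_0)$. With $k=|\tau|$, $V[k]$ is the set of $k$-tuples of distinct vertices, $\tau[k]$ the set of $k$-tuples of distinct types, $\Omega(\mathbf u,\boldsymbol\gamma)$ the set of states mapping the $i$-th entry of $\mathbf u$ to the $i$-th entry of $\boldsymbol\gamma$ for all $i$. $\mathcal D(G,\tau)$ is the set of distributions $D$ on $\Omega$ for which there are distributions $D_{\mathbf u,\boldsymbol\gamma}$ on $\Omega(\mathbf u,\boldsymbol\gamma)$ with $\Pr_D(S)=\frac{1}{|V[k]\times\tau[k]|}\sum_{(\mathbf u,\boldsymbol\gamma)\in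 V[k]\times\tau[k]}\Pr_{D_{\mathbf u,\boldsymbol\gamma}}(S)$ for all $S$. *)

From HB Require Import structures.
From mathcomp Require Import all_boot all_order all_algebra.
From mathcomp Require Import all_classical all_reals all_analysis.
Set Implicit Arguments. Unset Strict Implicit. Unset Printing Implicit Defensive.
Import Order.TTheory GRing.Theory Num.Theory.
Import numFieldNormedType.Exports.
Local Open Scope ring_scope.

Section Moran.
Variables (R : realType) (V T : finType) (adj : rel V) (f : T -> rat).

Definition state := {ffun V -> T}.

Definition nbhd (v : V) : {set V} := [set w | adj v w].

Definition upd (S : state) (v w : V) : state :=
  [ffun x => if x == w then S v else S x].

Definition total_fit (S : state) : R := \sum_(u : V) ratr (f (S u)).

(* one-step transition probability of the Moran process.
   (If N(v) is empty -- only possible for a one-vertex connected graph --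
   the convention is that the state does not change.) *)
Definition trans (S S' : state) : R :=
  \sum_(v : V)
    (ratr (f (S v)) / total_fit S) *
    (if #|nbhd v| == 0%N then (S' == S)%:R
     else \sum_(w in nbhd v) (#|nbhd v|%:R)^-1 * (S' == upd S v w)%:R).

Fixpoint law (M0 : state) (t : nat) : state -> R :=
  match t with
  | 0%N => fun S => (S == M0)%:R
  | t'.+1 => fun S' => \sum_(S : state) law M0 t' S * trans S S'
  end.

Definition mono (j : T) : state := [ffun _ => j].

(* Since mono j is absorbing, the event "eventually all j" is the increasing
   union over t of {M_t = mono j}, so its probability is the limit. *)
Definition fix_prob (j : T) (M0 : state) : R :=
  limn (fun t => law M0 t (mono j)).

Definition fix_prob_D (j : T) (D : state -> R) : R :=
  \sum_(M0 : state) D M0 * fix_prob j M0.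

End Moran.

Definition is_distr (R : realType) (X : finType) (P : X -> R) : Prop :=
  (forall x, 0 <= P x) /\ \sum_(x : X) P x = 1.

Definition fittest (T : finType) (f : T -> rat) : {set T} :=
  [set i | [forall j, f j <= f i]].

Definition states_with (V T : finType) (k : nat) (u : k.-tuple V)
  (g : k.-tuple T) : {set state V T} :=
  [set S : state V T | [forall i : 'I_k, S (tnth u i) == tnth g i]].

(* the class D(G, tau) of initial distributions, k = |tau|;
   V[k] = uniq k-tuples of vertices, tau[k] = uniq k-tuples of types *)
Definition good_init (R : realType) (V T : finType) (D : state V T -> R) : Prop :=
  is_distr D /\
  exists Du : #|T|.-tuple V -> #|T|.-tuple T -> state V T -> R,
    (forall (u : #|T|.-tuple V) (g : #|T|.-tuple T), uniq u -> uniq g ->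
        is_distr (Du u g) /\
        (forall S, S \notin states_with u g -> Du u g S = 0)) /\
    (forall S, D S =
       (#|[set u : #|T|.-tuple V | uniq u]|%:R
        * #|[set g : #|T|.-tuple T | uniq g]|%:R)^-1
       * \sum_(u : #|T|.-tuple V | uniq u) \sum_(g : #|T|.-tuple T | uniq g)
           Du u g S).

Definition connected_graph (V : finType) (adj : rel V) : Prop :=
  symmetric adj /\ irreflexive adj /\ (forall x y, connect adj x y).

From HB Require Import structures.
From mathcomp Require Import all_boot all_order all_algebra perm.
From mathcomp Require Import all_classical all_reals all_analysis.
From mathcomp Require Import ring.
Import Order.TTheory GRing.Theory Num.Theory.
Import numFieldNormedType.Exports.
Local Open Scope ring_scope.
Set Implicit Arguments. Unset Strict Implicit. Unset Printing Implicit Defensive.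

(* The potential Phi(S) = sum over the alpha-vertices v of 1/deg v is a
   submartingale of the Moran process.  Vertex v reproduces onto its neighbour
   w with probability f(S v)/(F deg v), F the total fitness, and this changes
   Phi by (1[S v = alpha] - 1[S w = alpha])/deg w; pairing each such step with
   the reverse step w -> v, the expected change of Phi is
     (1/2F) sum_{v ~ w} (f(S v) - f(S w)) (1[S v = alpha] - 1[S w = alpha]) / (deg v deg w),
   which is nonnegative because alpha is fittest.  From every state containing
   alpha the all-alpha state is reached within |V| steps with probability
   bounded below, so eventually the process is absorbed there or alpha has
   died out; hence pi_alpha(S) >= Phi(S) / Phi(all alpha).  Under an initial
   distribution in D(G, tau) the vertex receiving alpha is uniform over V, so
   E Phi(M_0) >= (1/|V|) sum_v 1/deg v = Phi(all alpha) / |V|. *)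

Lemma sumr_indicl (R : pzSemiRingType) (I : finType) (F : I -> R) (a : I) :
  \sum_i (i == a)%:R * F i = F a.
Proof. by rewrite (bigD1 a) //= eqxx mul1r big1 ?addr0 // => i /negbTE ->; rewrite mul0r. Qed.

Lemma sumr_indicr (R : pzSemiRingType) (I : finType) (F : I -> R) (a : I) :
  \sum_i F i * (i == a)%:R = F a.
Proof. by rewrite (bigD1 a) //= eqxx mulr1 big1 ?addr0 // => i /negbTE ->; rewrite mulr0. Qed.

Lemma symmetrized_sum_ge0 (R : numDomainType) (I : finType) (c : I -> I -> R) (x y : I -> R) :
  (forall i j, c i j = c j i) ->
  (forall i j, 0 <= c i j * ((x i - x j) * (y i - y j))) ->
  0 <= \sum_i \sum_j c i j * (x i * (y i - y j)).
Proof.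
move=> c_sym c_ge0; set A := \sum_i _.
have twoA : A + A = \sum_i \sum_j c i j * ((x i - x j) * (y i - y j)).
  rewrite {2}/A exchange_big -big_split; apply: eq_bigr => i _.
  rewrite -big_split; apply: eq_bigr => j _ /=; rewrite (c_sym j i); ring.
have : 0 <= A + A by rewrite twoA sumr_ge0 // => i _; rewrite sumr_ge0.
by rewrite -mulr2n pmulrn_lge0.
Qed.

Lemma connect_crossing (V : finType) (e : rel V) (p : pred V) x y :
  connect e x y -> p x -> ~~ p y -> exists v w, [/\ e v w, p v & ~~ p w].
Proof.
case/connectP=> s + ->; elim: s x => [|z s IH] x /=; first by move=> _ ->.
case/andP=> exz ez_s px; case: (boolP (p z)) => [pz|npz]; first exact: IH.
by move=> _; exists x, z.
Qed.

Lemma card_uniq_tuple_tnth (V : finType) k (i : 'I_k) (v w : V) :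
  #|[set u : k.-tuple V | uniq u & tnth u i == v]| =
  #|[set u : k.-tuple V | uniq u & tnth u i == w]|.
Proof.
pose s (u : k.-tuple V) := map_tuple (tperm v w) u.
have sK : involutive s.
  by move=> u; apply: val_inj; rewrite /= -map_comp map_id_in // => x _; rewrite /= tpermK.
rewrite -(card_imset _ (inv_inj sK)) (can_imset_pre _ sK); apply: eq_card => u.
rewrite !inE /s map_inj_uniq; last exact: perm_inj.
by rewrite tnth_map (can2_eq (tpermK v w) (tpermK v w)) tpermL.
Qed.

Lemma sum_uniq_tuple_tnth (R : comPzRingType) (V : finType) k (i : 'I_k) (h : V -> R) :
  #|V|%:R * \sum_(u : k.-tuple V | uniq u) h (tnth u i) =
  #|[set u : k.-tuple V | uniq u]|%:R * \sum_v h v.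
Proof.
pose c v := #|[set u : k.-tuple V | uniq u & tnth u i == v]|.
have sum_c : \sum_(u : k.-tuple V | uniq u) h (tnth u i) = \sum_v h v *+ c v.
  rewrite (partition_big (fun u => tnth u i) xpredT) //; apply: eq_bigr => v _.
  rewrite (eq_bigr (fun=> h v)) => [|u /andP[_ /eqP ->]] //.
  by rewrite sumr_const; congr (_ *+ _); apply: eq_card => u; rewrite inE.
have card_uniq v : #|[set u : k.-tuple V | uniq u]| = (c v * #|V|)%N.
  rewrite -sum1_card (partition_big (fun u => tnth u i) xpredT) //=.
  rewrite (eq_bigr (fun=> c v)) => [|w _]; first by rewrite sum_nat_const cardT -cardE mulnC.
  rewrite sum1dep_card /c -(card_uniq_tuple_tnth i w v); apply: eq_card => u.
  by rewrite !inE.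
rewrite sum_c !mulr_sumr; apply: eq_bigr => v _.
by rewrite (card_uniq v) natrM -mulr_natl; ring.
Qed.

Lemma mem_uniq_full_tuple (T : finType) (g : #|T|.-tuple T) x : uniq g -> x \in g.
Proof.
move=> g_uniq; have g_full : #|g| = #|T| by rewrite (card_uniqP g_uniq) size_tuple.
have /subset_cardP/(_ (subset_predT _)) g_all := g_full.
by rewrite g_all.
Qed.

Lemma distr_expect_ge (R : realType) (X : finType) (P : X -> R) (A : {set X}) (h : X -> R) c :
  is_distr P -> (forall x, x \notin A -> P x = 0) -> (forall x, x \in A -> c <= h x) ->
  c <= \sum_x P x * h x.
Proof.
move=> [P_ge0 P_sum1] P_supp h_ge; rewrite -[c]mul1r -P_sum1 mulr_suml ler_sum // => x _.
by case: (boolP (x \in A)) => [/h_ge c_le|/P_supp ->]; rewrite ?mul0r // ler_wpM2l.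
Qed.

Section FiniteMarkovChain.
Variables (R : realType) (X : finType) (P : X -> X -> R).
Hypothesis P_ge0 : forall x y, 0 <= P x y.
Hypothesis P_sum1 : forall x, \sum_y P x y = 1.

Fixpoint chain_law (x0 : X) (t : nat) : X -> R :=
  match t with
  | 0%N => fun y => (y == x0)%:R
  | t'.+1 => fun z => \sum_(y : X) chain_law x0 t' y * P y z
  end.

Lemma chain_law_ge0 x0 t y : 0 <= chain_law x0 t y.
Proof.
elim: t y => [|t IH] y /=; first exact: ler0n.
by rewrite sumr_ge0 // => z _; rewrite mulr_ge0.
Qed.

Lemma chain_law_sum1 x0 t : \sum_y chain_law x0 t y = 1.
Proof.
elim: t => [|t IH] /=; first by rewrite (bigD1 x0) //= eqxx big1 ?addr0 // => y /negbTE ->.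
by rewrite exchange_big -[RHS]IH; apply: eq_bigr => y _; rewrite -mulr_sumr P_sum1 mulr1.
Qed.

Lemma chain_law_le1 x0 t y : chain_law x0 t y <= 1.
Proof.
rewrite -(chain_law_sum1 x0 t) (bigD1 y) //= lerDl.
by rewrite sumr_ge0 // => *; apply: chain_law_ge0.
Qed.

Lemma chain_law1 x y : chain_law x 1 y = P x y.
Proof. exact: sumr_indicl. Qed.

Lemma chain_lawD x0 t s z :
  chain_law x0 (t + s) z = \sum_y chain_law x0 t y * chain_law y s z.
Proof.
elim: s z => [|s IH] z.
  by rewrite addn0 /=; under eq_bigr do rewrite eq_sym; rewrite sumr_indicr.
rewrite addnS /=; under eq_bigr do rewrite IH mulr_suml.
rewrite exchange_big; apply: eq_bigr => y _.
by rewrite mulr_sumr; apply: eq_bigr => y' _; rewrite mulrA.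
Qed.

Lemma chain_law_step_gt0 x y z t :
  0 < P x y -> 0 < chain_law y t z -> 0 < chain_law x t.+1 z.
Proof.
move=> Pxy lawyz; rewrite -add1n chain_lawD (bigD1 y) // chain_law1.
apply: ltr_wpDr; last exact: mulr_gt0.
by rewrite sumr_ge0 // => *; rewrite mulr_ge0 ?chain_law_ge0.
Qed.

Lemma subharmonic_le_expect (h : X -> R) x0 t :
  (forall x, h x <= \sum_y P x y * h y) ->
  h x0 <= \sum_y chain_law x0 t y * h y.
Proof.
move=> h_sub; elim: t => [|t IH] /=; first by rewrite sumr_indicl.
apply: le_trans IH _; under [X in _ <= X]eq_bigr do rewrite mulr_suml.
rewrite exchange_big ler_sum // => y _.
under eq_bigr do rewrite -mulrA.
by rewrite -mulr_sumr ler_wpM2l ?chain_law_ge0.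
Qed.

Section Absorption.
Variable a : X.
Hypothesis P_absorbing : P a a = 1.

Lemma chain_law_absorbing_nondecreasing x0 :
  {homo (fun t => chain_law x0 t a) : n m / (n <= m)%N >-> n <= m}.
Proof.
apply/nondecreasing_seqP => t; rewrite /= (bigD1 a) //= P_absorbing mulr1.
by rewrite lerDl sumr_ge0 // => *; rewrite mulr_ge0 ?chain_law_ge0.
Qed.

Lemma chain_law_absorbing_cvg x0 : cvgn (fun t => chain_law x0 t a).
Proof.
apply: nondecreasing_is_cvgn; first exact: chain_law_absorbing_nondecreasing.
by exists 1 => _ [t _ <-]; apply: chain_law_le1.
Qed.

Variables (B : pred X) (N : nat).
Hypothesis B_absorbed : forall x, B x -> 0 < chain_law x N a.

Lemma absorbed_uniformly : exists2 e, 0 < e & forall x, B x -> e <= chain_law x N a.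
Proof.
exists (\prod_(x | B x) chain_law x N a); first exact: prodr_gt0.
move=> x Bx; rewrite (bigD1 x) //= ler_piMr //.
  by rewrite chain_law_ge0.
by apply: prodr_ile1 => y _; rewrite chain_law_ge0 chain_law_le1.
Qed.

Lemma absorbing_law_ge1 t : 1 <= chain_law a t a.
Proof.
have := chain_law_absorbing_nondecreasing a (leq0n t).
by rewrite /= eqxx.
Qed.

Lemma chain_law_absorbing_sum x0 t :
  chain_law x0 t a = \sum_y chain_law x0 t y * (y == a)%:R.
Proof. by rewrite sumr_indicr. Qed.

Lemma chain_law_absorbing_gain e x0 t :
  (forall x, B x -> e <= chain_law x N a) ->
  e * \sum_y chain_law x0 t y * (B y && (y != a))%:R <=
  chain_law x0 (t + N) a - chain_law x0 t a.
Proof.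
move=> e_le; rewrite lerBrDl chain_lawD chain_law_absorbing_sum mulr_sumr -big_split.
apply: ler_sum => y _ /=; rewrite mulrCA -mulrDr ler_wpM2l ?chain_law_ge0 //.
case: eqVneq => [->|_] /=; first by rewrite andbF mulr0 addr0 absorbing_law_ge1.
rewrite andbT add0r; case: (boolP (B y)) => [/e_le|_]; first by rewrite mulr1.
by rewrite mulr0 chain_law_ge0.
Qed.

Theorem subharmonic_le_absorption (h : X -> R) (M : R) x0 :
  0 <= M -> (forall x, h x <= \sum_y P x y * h y) ->
  (forall x, h x <= M * (B x)%:R) ->
  h x0 <= M * limn (fun t => chain_law x0 t a).
Proof.
move=> M_ge0 h_sub h_le; have [e e_gt0 e_le] := absorbed_uniformly.
pose m t := chain_law x0 t a.
pose q t := \sum_y chain_law x0 t y * (B y && (y != a))%:R.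
have h_le_mq t : h x0 <= M * (m t + q t).
  apply: le_trans (subharmonic_le_expect x0 t h_sub) _.
  rewrite /m chain_law_absorbing_sum -big_split mulr_sumr ler_sum // => y _ /=.
  rewrite -mulrDr mulrCA ler_wpM2l ?chain_law_ge0 //; apply: le_trans (h_le y) _.
  rewrite ler_wpM2l //; case: eqVneq => [->|_] /=; last by rewrite add0r andbT.
  by rewrite andbF addr0 lern1 leq_b1.
(* The mass q t left in B off a is at most (m (t + N) - m t) / e, which tends to 0. *)
pose u t := M * m t + M / e * (m (t + N)%N - m t).
have h_le_u t : h x0 <= u t.
  apply: le_trans (h_le_mq t) _; rewrite mulrDr lerD2l -mulrA ler_wpM2l //.
  by rewrite ler_pdivlMl // chain_law_absorbing_gain.
have m_cvg : cvgn m by apply: chain_law_absorbing_cvg.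
have u_cvg : (u @ \oo --> M * limn m + M / e * (limn m - limn m))%classic.
  have m_shift_cvg : (m (t + N)%N @[t --> \oo] --> limn m)%classic by rewrite (cvg_shiftn N m).
  exact: cvgD (cvgM (cvg_cst _) m_cvg) (cvgM (cvg_cst _) (cvgB m_shift_cvg m_cvg)).
have -> : M * limn m = limn u by rewrite (cvg_lim _ u_cvg) // subrr mulr0 addr0.
by apply: limr_ge; [exact: cvgP u_cvg | near=> t; exact: h_le_u].
Unshelve. all: end_near.
Qed.

End Absorption.
End FiniteMarkovChain.

Section MoranProcess.
Variables (R : realType) (V T : finType) (adj : rel V) (f : T -> rat).
Hypothesis f_ge1 : forall i, 1 <= f i.
Hypothesis V_gt0 : (0 < #|V|)%N.

Local Notation state := (state V T).
Local Notation deg v := #|nbhd adj v|.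
Local Notation fitness S v := (ratr (f (S v)) : R).

Lemma fitness_gt0 (S : state) v : 0 < fitness S v.
Proof. by apply: lt_le_trans ltr01 _; rewrite -(rmorph1 (@ratr R)) ler_rat. Qed.

Lemma total_fit_gt0 (S : state) : 0 < total_fit R f S.
Proof.
have [v0 _] := card_gt0P V_gt0.
rewrite /total_fit (bigD1 v0) //= ltr_wpDr ?fitness_gt0 //.
by rewrite sumr_ge0 // => v _; rewrite ltW ?fitness_gt0.
Qed.

Definition birth_prob (S : state) v : R := fitness S v / total_fit R f S.

Lemma birth_prob_gt0 (S : state) v : 0 < birth_prob S v.
Proof. exact: divr_gt0 (fitness_gt0 S v) (total_fit_gt0 S). Qed.

Lemma birth_prob_ge0 (S : state) v : 0 <= birth_prob S v.
Proof. exact: ltW (birth_prob_gt0 S v). Qed.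

Lemma sum_birth_prob (S : state) : \sum_v birth_prob S v = 1.
Proof. by rewrite -mulr_suml divff // gt_eqF ?total_fit_gt0. Qed.

Definition offspring_mean (S : state) (g : state -> R) v : R :=
  if deg v == 0%N then g S
  else \sum_(w in nbhd adj v) (deg v)%:R^-1 * g (upd S v w).

Lemma offspring_mean_cst (S : state) (c : R) v : offspring_mean S (fun=> c) v = c.
Proof.
rewrite /offspring_mean; case: ifP => // /negbT deg_neq0.
by rewrite sumr_const -mulrnAl -[_^-1 *+ _]mulr_natr mulVf ?mul1r ?pnatr_eq0.
Qed.

Lemma offspring_mean_ge0 (S : state) (g : state -> R) v :
  (forall S', 0 <= g S') -> 0 <= offspring_mean S g v.
Proof.
move=> g_ge0; rewrite /offspring_mean; case: ifP => // _.
by rewrite sumr_ge0 // => w _; rewrite mulr_ge0 ?invr_ge0.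
Qed.

Lemma trans_birth_offspring (S S' : state) :
  trans R adj f S S' = \sum_v birth_prob S v * offspring_mean S (fun S2 => (S' == S2)%:R) v.
Proof. by []. Qed.

Lemma law_chain : law R adj f = chain_law (trans R adj f).
Proof. by []. Qed.

Lemma trans_expect (S : state) (g : state -> R) :
  \sum_S' trans R adj f S S' * g S' = \sum_v birth_prob S v * offspring_mean S g v.
Proof.
rewrite /trans; under eq_bigr do rewrite mulr_suml.
rewrite exchange_big; apply: eq_bigr => v _.
under eq_bigr do rewrite -(mulrA (_ / _)).
rewrite -mulr_sumr /offspring_mean; congr (_ * _).
case: ifP => _; first exact: sumr_indicl.
under eq_bigr do rewrite mulr_suml.
rewrite exchange_big; apply: eq_bigr => w _; under eq_bigr do rewrite -mulrA.
by rewrite -mulr_sumr sumr_indicl.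
Qed.

Lemma trans_ge0 (S S' : state) : 0 <= trans R adj f S S'.
Proof.
rewrite trans_birth_offspring sumr_ge0 // => v _.
by rewrite mulr_ge0 ?birth_prob_ge0 ?offspring_mean_ge0.
Qed.

Lemma trans_sum1 (S : state) : \sum_S' trans R adj f S S' = 1.
Proof.
under eq_bigr do rewrite -[trans _ _ _ _ _]mulr1.
by rewrite trans_expect; under eq_bigr do rewrite offspring_mean_cst mulr1; apply: sum_birth_prob.
Qed.

Lemma upd_mono (j : T) v w : upd (mono V j) v w = mono V j.
Proof. by apply/ffunP => x; rewrite !ffunE; case: ifP. Qed.

Lemma trans_mono (j : T) (S' : state) : trans R adj f (mono V j) S' = (S' == mono V j)%:R.
Proof.
have mean_mono v : offspring_mean (mono V j) (fun S2 => (S' == S2)%:R) v = (S' == mono V j)%:R.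
  by rewrite /offspring_mean; under eq_bigr do rewrite upd_mono; apply: offspring_mean_cst.
rewrite trans_birth_offspring; under eq_bigr do rewrite mean_mono.
by rewrite -mulr_suml sum_birth_prob mul1r.
Qed.

Lemma trans_upd_gt0 (S : state) v w : adj v w -> 0 < trans R adj f S (upd S v w).
Proof.
move=> adj_vw; have w_nbhd : w \in nbhd adj v by rewrite inE.
have deg_gt0 : (0 < deg v)%N by apply/card_gt0P; exists w.
rewrite trans_birth_offspring (bigD1 v) //= ltr_wpDr //.
  by rewrite sumr_ge0 // => u _; rewrite mulr_ge0 ?birth_prob_ge0 ?offspring_mean_ge0.
rewrite mulr_gt0 ?birth_prob_gt0 // /offspring_mean gtn_eqF //.
rewrite (bigD1 w) //= eqxx mulr1 ltr_wpDr ?invr_gt0 ?ltr0n //.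
by rewrite sumr_ge0 // => u _; rewrite mulr_ge0 ?invr_ge0.
Qed.

Section Potential.
Variable alpha : T.
Hypothesis alpha_fittest : forall j, f j <= f alpha.
Hypothesis adj_sym : symmetric adj.

Local Notation is_alpha S v := ((S v == alpha)%:R : R).

(* [maxn 1] only matters for an isolated vertex, which [0^-1 = 0] would give weight 0. *)
Definition inv_deg v : R := (maxn 1 (deg v))%:R^-1.

Definition potential (S : state) : R := \sum_(v | S v == alpha) inv_deg v.

Lemma inv_deg_gt0 v : 0 < inv_deg v.
Proof. by rewrite invr_gt0 ltr0n leq_max. Qed.

Lemma inv_deg_ge0 v : 0 <= inv_deg v.
Proof. exact: ltW (inv_deg_gt0 v). Qed.

Lemma inv_deg_adj v w : adj v w -> inv_deg v = (deg v)%:R^-1.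
Proof.
move=> adj_vw; rewrite /inv_deg; congr (_%:R^-1); apply/maxn_idPr.
by apply/card_gt0P; exists w; rewrite inE.
Qed.

Lemma potential_upd (S : state) v w :
  potential (upd S v w) = potential S + (is_alpha S v - is_alpha S w) * inv_deg w.
Proof.
rewrite /potential big_mkcond [X in _ = X + _]big_mkcond /=.
rewrite (bigD1 w) // [X in _ = X + _](bigD1 w) //= ffunE eqxx.
rewrite (eq_bigr (fun u => if S u == alpha then inv_deg u else 0)); last first.
  by move=> u /negbTE u_neq_w; rewrite ffunE u_neq_w.
by case: (S v == alpha); case: (S w == alpha) => /=; ring.
Qed.

Lemma offspring_mean_potential (S : state) v :
  offspring_mean S potential v =
  potential S + \sum_w (adj v w)%:R * (inv_deg v * inv_deg w) * (is_alpha S v - is_alpha S w).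
Proof.
rewrite /offspring_mean; case: ifP => [/eqP deg0|/negbT deg_neq0].
  rewrite big1 ?addr0 // => w _; case: (boolP (adj v w)) => [adj_vw|]; last by rewrite !mul0r.
  by move: deg0; rewrite (cardD1 w) inE adj_vw.
under eq_bigr do rewrite potential_upd mulrDr.
rewrite big_split /=; congr (_ + _).
  by have := offspring_mean_cst S (potential S) v; rewrite /offspring_mean (negbTE deg_neq0).
rewrite big_mkcond /=; apply: eq_bigr => w _; rewrite inE.
case: (boolP (adj v w)) => [adj_vw|_]; last by rewrite !mul0r.
by rewrite (inv_deg_adj adj_vw) /=; ring.
Qed.

Lemma fitness_comonotone (S : state) v w :
  0 <= (fitness S v - fitness S w) * (is_alpha S v - is_alpha S w).
Proof.
case: (eqVneq (S v) alpha) => [->|_]; case: (eqVneq (S w) alpha) => [->|_] //=;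
  rewrite ?subrr ?mulr0 ?mul0r ?subr0 ?sub0r ?mulr1 ?mulrN1 ?oppr_ge0 ?subr_ge0 ?subr_le0 //;
  by rewrite ler_rat.
Qed.

Lemma potential_subharmonic (S : state) :
  potential S <= \sum_S' trans R adj f S S' * potential S'.
Proof.
rewrite trans_expect; under eq_bigr do rewrite offspring_mean_potential mulrDr.
rewrite big_split /= -mulr_suml sum_birth_prob mul1r lerDl.
set c := fun v w => (adj v w)%:R * (inv_deg v * inv_deg w) : R.
have -> : \sum_v birth_prob S v * \sum_w c v w * (is_alpha S v - is_alpha S w) =
    (total_fit R f S)^-1 *
    \sum_v \sum_w c v w * (fitness S v * (is_alpha S v - is_alpha S w)).
  rewrite mulr_sumr; apply: eq_bigr => v _; rewrite !mulr_sumr.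
  by apply: eq_bigr => w _; rewrite /birth_prob; ring.
apply: mulr_ge0; first by rewrite invr_ge0 ltW ?total_fit_gt0.
apply: (symmetrized_sum_ge0 (x := fun v => fitness S v) (y := fun v => is_alpha S v)) => v w.
  by rewrite /c adj_sym (mulrC (inv_deg v)).
by rewrite mulr_ge0 ?fitness_comonotone // mulr_ge0 ?mulr_ge0 ?inv_deg_ge0.
Qed.

Lemma inv_deg_le_potential (S : state) v : S v == alpha -> inv_deg v <= potential S.
Proof.
move=> Sv_alpha; rewrite /potential (bigD1 v) //= lerDl.
by rewrite sumr_ge0 // => u _; apply: inv_deg_ge0.
Qed.

Definition present (S : state) := [exists v, S v == alpha].

Lemma potential_mono : potential (mono V alpha) = \sum_v inv_deg v.
Proof. by apply: eq_bigl => v; rewrite ffunE eqxx. Qed.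

Lemma potential_mono_gt0 : 0 < potential (mono V alpha).
Proof.
have [v0 _] := card_gt0P V_gt0.
rewrite potential_mono (bigD1 v0) //= ltr_wpDr ?inv_deg_gt0 //.
by rewrite sumr_ge0 // => v _; apply: inv_deg_ge0.
Qed.

Lemma potential_le_present (S : state) :
  potential S <= potential (mono V alpha) * (present S)%:R.
Proof.
rewrite potential_mono; case: (boolP (present S)) => [_|/existsPn S_no_alpha].
  rewrite mulr1 [X in X <= _]big_mkcond ler_sum // => v _.
  by case: ifP; rewrite ?inv_deg_ge0.
by rewrite mulr0 /potential big_pred0 // => v; apply/negbTE/S_no_alpha.
Qed.

Hypothesis adj_connected : forall x y, connect adj x y.

Lemma present_absorbed_within (S : state) k :
  present S -> #|[set v | S v != alpha]| = k -> 0 < law R adj f S k (mono V alpha).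
Proof.
elim: k S => [|k IH] S /existsP[x Sx_alpha].
  move/eqP; rewrite cards_eq0 => /eqP no_other.
  suff -> : S = mono V alpha by rewrite /= eqxx ltr01.
  apply/ffunP => v; rewrite ffunE; apply/eqP/negPn/negP => Sv.
  have : v \in [set u | S u != alpha] by rewrite inE Sv.
  by rewrite no_other inE.
move=> card_other; have /card_gt0P[y] : (0 < #|[set v | S v != alpha]|)%N.
  by rewrite card_other.
rewrite inE => Sy_other.
have [v [w [adj_vw Sv_alpha Sw_other]]] :=
  connect_crossing (p := fun u => S u == alpha) (adj_connected x y) Sx_alpha Sy_other.
have v_neq_w : v != w by apply: contraNneq Sw_other => <-.
rewrite law_chain; apply: (chain_law_step_gt0 trans_ge0 (trans_upd_gt0 S adj_vw)).
rewrite -law_chain; apply: IH.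
  by apply/existsP; exists v; rewrite ffunE (negbTE v_neq_w).
have -> : [set u | upd S v w u != alpha] = [set u | S u != alpha] :\ w.
  by apply/setP => u; rewrite !inE ffunE; case: (eqVneq u w) => [->|] //=; rewrite Sv_alpha.
by move: card_other; rewrite (cardsD1 w) inE Sw_other add1n => -[].
Qed.

Lemma present_absorbed (S : state) : present S -> 0 < law R adj f S #|V| (mono V alpha).
Proof.
move=> S_present; apply: lt_le_trans (present_absorbed_within S_present erefl) _.
rewrite law_chain; apply: (chain_law_absorbing_nondecreasing trans_ge0).
  by rewrite trans_mono eqxx.
exact: max_card.
Qed.

Theorem potential_le_fix_prob (S : state) :
  potential S <= potential (mono V alpha) * fix_prob R adj f alpha S.
Proof.
apply: (subharmonic_le_absorption trans_ge0 trans_sum1 _ present_absorbed S).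
- by rewrite trans_mono eqxx.
- exact: ltW potential_mono_gt0.
- exact: potential_subharmonic.
- exact: potential_le_present.
Qed.

End Potential.

End MoranProcess.

Lemma states_with_tnth (V T : finType) k (u : k.-tuple V) (g : k.-tuple T) (i : 'I_k) S :
  S \in states_with u g -> S (tnth u i) = tnth g i.
Proof. by rewrite inE => /forallP/(_ i)/eqP. Qed.

Section GoodInitialDistribution.
Variables (R : realType) (V T : finType) (D : state V T -> R).
Hypothesis D_good : good_init D.

Local Notation k := #|T|.
Local Notation NU := #|[set u : k.-tuple V | uniq u]|.
Local Notation NG := #|[set g : k.-tuple T | uniq g]|.

Lemma good_init_uniq_tuples : (0 < NU)%N /\ (0 < NG)%N.
Proof.
case: D_good => [[_ D_sum1] [Du [_ D_avg]]].
have : (NU%:R * NG%:R)^-1 != 0 :> R.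
  apply: contra_eqN D_sum1 => /eqP inv0.
  rewrite big1 => [|S _]; first by rewrite eq_sym oner_eq0.
  by rewrite D_avg inv0 mul0r.
by rewrite invr_eq0 mulf_eq0 !pnatr_eq0 negb_or !lt0n => /andP.
Qed.

Lemma good_init_card_gt0 : (0 < k)%N -> (0 < #|V|)%N.
Proof.
move=> k_gt0; have [/card_gt0P[u /[!inE] u_uniq] _] := good_init_uniq_tuples.
apply: leq_trans k_gt0 _; rewrite -[k](size_tuple u) -(card_uniqP u_uniq).
exact: max_card.
Qed.

Theorem good_init_expect_ge (alpha : T) (c : V -> R) (h : state V T -> R) :
  (forall (u : k.-tuple V) (g : k.-tuple T) (i : 'I_k) (S : state V T),
     S \in states_with u g -> tnth g i = alpha -> c (tnth u i) <= h S) ->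
  \sum_v c v <= #|V|%:R * \sum_S D S * h S.
Proof.
move=> c_le_h; case: D_good => [_ [Du [Du_good D_avg]]].
have [NU_gt0 NG_gt0] := good_init_uniq_tuples.
pose C : R := (NU%:R * NG%:R)^-1.
have D_expect : \sum_S D S * h S =
    C * \sum_(g : k.-tuple T | uniq g) \sum_(u : k.-tuple V | uniq u) \sum_S Du u g S * h S.
  under eq_bigr do rewrite D_avg -mulrA mulr_suml.
  rewrite -mulr_sumr; congr (_ * _).
  under eq_bigr do under eq_bigr do rewrite mulr_suml.
  by rewrite exchange_big; under eq_bigr do rewrite exchange_big; rewrite exchange_big.
have inner_ge (g : k.-tuple T) : uniq g ->
    NU%:R * \sum_v c v <= #|V|%:R * \sum_(u : k.-tuple V | uniq u) \sum_S Du u g S * h S.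
  move=> g_uniq; have /tnthP[i alpha_i] := mem_uniq_full_tuple alpha g_uniq.
  rewrite -(sum_uniq_tuple_tnth i) ler_wpM2l // ler_sum // => u u_uniq.
  have [Du_distr Du_supp] := Du_good u g u_uniq g_uniq.
  by apply: distr_expect_ge Du_distr Du_supp _ => S S_in; exact: c_le_h S_in (esym alpha_i).
rewrite D_expect mulrA (mulrC #|V|%:R) -mulrA mulr_sumr.
apply: le_trans (_ : C * \sum_(g : k.-tuple T | uniq g) NU%:R * \sum_v c v <= _).
  rewrite sumr_const (eq_card (B := [set g : k.-tuple T | uniq g])) => [|g]; last by rewrite inE.
  by rewrite -mulrnAl -mulrnA natrM mulrA /C mulVf ?mul1r // mulf_neq0 // pnatr_eq0 -lt0n.
by rewrite ler_wpM2l ?invr_ge0 ?mulr_ge0 // ler_sum.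
Qed.

End GoodInitialDistribution.

Unset Implicit Arguments.

Theorem corollary9 (R : realType) (V T : finType) (adj : rel V)
  (f : T -> rat) (alpha : T) (D : state V T -> R) :
  connected_graph adj ->
  (forall i : T, 1 <= f i) ->
  alpha \in fittest f ->
  good_init D ->
  (#|V|%:R)^-1 <= fix_prob_D adj f alpha D.
Proof.
move=> [adj_sym [_ adj_connected]] f_ge1 alpha_in D_good.
have alpha_fittest j : f j <= f alpha by move: alpha_in; rewrite inE => /forallP.
have V_gt0 : (0 < #|V|)%N by apply: good_init_card_gt0 D_good _; apply/card_gt0P; exists alpha.
pose Z := potential R adj alpha (mono V alpha).
have Z_gt0 : 0 < Z by apply: potential_mono_gt0.
have fix_ge S : potential R adj alpha S / Z <= fix_prob R adj f alpha S.
  by rewrite ler_pdivrMr // mulrC; apply: potential_le_fix_prob.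
have sum_inv_deg : \sum_v inv_deg R adj v / Z = 1.
  by rewrite -mulr_suml -(potential_mono R adj alpha) divff ?gt_eqF.
rewrite -[_^-1]mulr1 ler_pdivrMl ?ltr0n // -[X in X <= _]sum_inv_deg.
pose h S := potential R adj alpha S / Z.
apply: le_trans (good_init_expect_ge D_good (alpha := alpha) (h := h) _) _.
  move=> u g i S S_in g_alpha; rewrite ler_pM2r ?invr_gt0 //.
  by apply: inv_deg_le_potential; rewrite (states_with_tnth i S_in) g_alpha.
have [[D_ge0 _] _] := D_good.
by rewrite /fix_prob_D ler_wpM2l // ler_sum // => S _; rewrite ler_wpM2l ?fix_ge.
Qed.
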